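(* Let $N>p\geq1$ and let $\mathbf{U}\in\mathbb{R}^{N\times p}$ with $\mathbf{U}^T\mathbf{U}=\mathbf{I}_p$ be drawn from the Bingham distribution with $N\times N$ symmetric parameter matrix $\mathbf{A}$, i.e. with density (with respect to the normalized uniform measure on $\{\mathbf{U}:\mathbf{U}^T\mathbf{U}=\mathbf{I}_p\}$) $p_B(\mathbf{U})=\exp(-\kappa_B(\mathbf{A}))\,\mathrm{etr}(\mathbf{U}^T\mathbf{A}\mathbf{U})$, where $\kappa_B(\mathbf{A})=\ln{}_1F_1(\tfrac{p}{2};\tfrac{N}{2};\mathbf{A})$. Let $\mathbf{A}=\mathbf{U}_a\boldsymbol{\Lambda}_a\mathbf{U}_a^T$ be an eigenvalue decomposition of $\mathbf{A}$ with $\mathbf{U}_a$ orthogonal and $\boldsymbol{\Lambda}_a=\mathrm{diag}(\lambda_a(1),\dots,\lambda_a(N))$, $\lambda_a(1)\geq\dots\geq\lambda_a(N)$. Define $\mathbf{M}=\int\mathbf{U}\mathbf{U}^Tp_B(\mathbf{U})\,d\mathbf{U}$. Then the eigenvalue decomposition of $\mathbf{M}$ is $\mathbf{M}=\exp(-\kappa_B(\mathbf{A}))\,\mathbf{U}_a\boldsymbol{\Gamma}\mathbf{U}_a^T$, where $\boldsymbol{\Gamma}=\mathrm{diag}(\gamma_1,\dots,\gamma_N)$ with $\gamma_k=\frac{\partial \exp(\kappa_B(\boldsymbol{\Lambda}_a))}{\partial\lambda_a(k)}$ (that is, $\boldsymbol{\Gamma}=\partial\exp(\kappa_B(\mathbf{A}))/\partial\boldsymbol{\Lambda}_a$,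 using $\kappa_B(\mathbf{A})=\kappa_B(\boldsymbol{\Lambda}_a)$), and $\gamma_1\geq\gamma_2\geq\dots\geq\gamma_N$.
   Context: $\mathrm{etr}(\mathbf{X})=\exp(\mathrm{Tr}(\mathbf{X}))$. ${}_1F_1(a;b;\mathbf{X})$ is the confluent hypergeometric function of matrix argument, which here is the normalizing constant: ${}_1F_1(\tfrac p2;\tfrac N2;\mathbf{A})=\int\mathrm{etr}(\mathbf{U}^T\mathbf{A}\mathbf{U})\,d\mathbf{U}$ with respect to the normalized uniform measure; it depends on $\mathbf{A}$ only through its eigenvalues. *)

From HB Require Import structures.
From mathcomp Require Import all_boot all_order all_algebra.
From mathcomp Require Import all_classical all_reals all_analysis.
Set Implicit Arguments. Unset Strict Implicit. Unset Printing Implicit Defensive.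
Import Order.TTheory GRing.Theory Num.Theory.
Import numFieldNormedType.Exports.
Local Open Scope classical_set_scope.
Local Open Scope ring_scope.

Section Bingham.
Variables (R : realType) (N p : nat).

(* sigma-algebra on N x p real matrices generated by the entry maps
   (= Borel sigma-algebra of R^{N x p}) *)
Definition entry_sets : set (set 'M[R]_(N, p)) :=
  [set X | exists (i : 'I_N) (j : 'I_p) (B : set R),
      measurable B /\ X = (fun M : 'M[R]_(N, p) => M i j) @^-1` B].

Definition mxMeas := g_sigma_algebraType entry_sets.

Definition stiefel : set mxMeas := [set U : 'M[R]_(N, p) | U^T *m U = 1%:M].

(* mu is the normalized uniform measure on the Stiefel manifold:
   a probability measure carried by the Stiefel manifold and invariant under
   left multiplication by orthogonal matrices (unique by compactness and
   transitivity of the O(N) action). *)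
Definition uniform_stiefel (mu : probability mxMeas R) : Prop :=
  mu stiefel = 1%E /\
  forall Q : 'M[R]_N, Q^T *m Q = 1%:M ->
    forall X : set mxMeas, measurable X ->
      mu ((fun U : mxMeas => (Q *m U : mxMeas)) @^-1` X) = mu X.

Definition etr (m : nat) (X : 'M[R]_m) : R := expR (\tr X).

(* 1F1(p/2; N/2; A) = \int etr(U^T A U) dU *)
Definition hyp1F1 (mu : probability mxMeas R) (A : 'M[R]_N) : R :=
  \int[mu]_(U in [set: mxMeas]) etr (U^T *m A *m (U : 'M[R]_(N, p))).

Definition kappaB (mu : probability mxMeas R) (A : 'M[R]_N) : R :=
  ln (hyp1F1 mu A).

Definition binghamDensity (mu : probability mxMeas R) (A : 'M[R]_N)
    (U : mxMeas) : R :=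
  expR (- kappaB mu A) * etr (U^T *m A *m (U : 'M[R]_(N, p))).

Definition binghamSecondMoment (mu : probability mxMeas R) (A : 'M[R]_N)
    : 'M[R]_N :=
  \matrix_(i, j) \int[mu]_(U in [set: mxMeas])
      (((U : 'M[R]_(N, p)) *m U^T) i j * binghamDensity mu A U).

Definition rowset (lam : 'rV[R]_N) (k : 'I_N) (t : R) : 'rV[R]_N :=
  \row_i (if i == k then t else lam 0 i).

(* t |-> exp(kappa_B(diag(lam_1, .., t, .., lam_N))) ; its derivative at
   t = lam_k is the partial derivative d exp(kappa_B(Lambda_a)) / d lam_a(k) *)
Definition expkappa_k (mu : probability mxMeas R) (lam : 'rV[R]_N) (k : 'I_N)
    (t : R) : R :=
  expR (kappaB mu (diag_mx (rowset lam k t))).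

Definition gammaB (mu : probability mxMeas R) (lam : 'rV[R]_N) : 'rV[R]_N :=
  \row_k derive1 (expkappa_k mu lam k) (lam 0 k).

End Bingham.

From HB Require Import structures.
From mathcomp Require Import all_boot all_order all_algebra.
From mathcomp Require Import all_classical all_reals all_analysis.
From mathcomp Require Import ring lra perm.
Set Implicit Arguments. Unset Strict Implicit. Unset Printing Implicit Defensive.
Import Order.TTheory GRing.Theory Num.Theory.
Import numFieldNormedType.Exports.
Local Open Scope classical_set_scope.
Local Open Scope ring_scope.

(* Since the uniform measure on the Stiefel manifold
   is invariant under U |-> Q U for orthogonal Q, the substitution U = Ua V turns
   the second moment of the Bingham law of A into exp(-kappa_B(A)) Ua G Ua^T,
   where G_kl = int (V V^T)_kl etr(V^T Lambda V) dV.
   - Flipping the sign of row k of V preserves the measure and etr(V^T Lambda V)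
     but negates (V V^T)_kl for l <> k, so G is diagonal.
   - G_kk is the derivative in lambda_k of int etr(V^T Lambda V) dV
     = exp kappa_B(Lambda): the difference quotient is controlled by
     |e^x - 1 - x| <= 2 x^2 for |x| <= 1/2, since 0 <= (V V^T)_kk <= 1 on the
     manifold.
   - Exchanging rows i and j of V gives
     2 (G_ii - G_jj) =
       int ((V V^T)_ii - (V V^T)_jj) (etr(V^T Lambda V) - etr(V^T Lambda' V)) dV,
     where Lambda' swaps lambda_i and lambda_j; both factors have the sign of
     lambda_i - lambda_j, hence G_ii >= G_jj when lambda_i >= lambda_j. *)

Lemma derivable_derive1_quotient_bound (R : realType) (f : R -> R) (a g d C : R) :
  0 < d -> 0 <= C ->
  (forall h, h != 0 -> `|h| <= d -> `|h^-1 * (f (h + a) - f a) - g| <= C * `|h|) ->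
  derivable f a 1 /\ derive1 f a = g.
Proof.
move=> d0 C0 hb.
have cvg_quot : (fun h => h^-1 *: (f (h + a) - f a)) @ 0^' --> g.
  apply/cvgrPdist_le => e e0.
  have de0 : 0 < Num.min d (e / (C + 1)) by rewrite lt_min d0 divr_gt0 // ltr_wpDl.
  near=> h.
  have hn0 : h != 0 by near: h; exact: nbhs_dnbhs_neq.
  have : `|h| <= Num.min d (e / (C + 1)) by near: h; exact: dnbhs0_le.
  rewrite le_min => /andP[hd he].
  rewrite distrC; apply: le_trans (hb h hn0 hd) _.
  apply: le_trans (ler_wpM2l C0 he) _.
  rewrite mulrA ler_pdivrMr ?ltr_wpDl //; nra.
have quotE : (fun h => h^-1 *: ((f \o shift a) (h *: 1) - f a)) =
             (fun h => h^-1 *: (f (h + a) - f a)).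
  by apply: funext => h /=; rewrite /shift [h%:A]mulr1.
split; first by rewrite /derivable quotE; apply/cvg_ex; exists g.
by rewrite /derive1; exact: cvg_lim.
Unshelve. all: by end_near.
Qed.

Lemma mulmx_conj_entry (R : comRingType) (n : nat) (Q X : 'M[R]_n) i j :
  (Q *m X *m Q^T) i j = \sum_l \sum_k Q i l * Q j k * X l k.
Proof.
rewrite mxE exchange_big /=; apply: eq_bigr => k _.
by rewrite mxE big_distrl /=; apply: eq_bigr => l _; rewrite !mxE; ring.
Qed.

Lemma expR_sub1_taylor_bound (R : realType) (x : R) :
  `|x| <= 2^-1 -> 0 <= expR x - 1 - x <= 2 * x ^+ 2.
Proof.
move=> hx; have l1 := expR_ge1Dx x; have l2 := expR_ge1Dx (- x).
have m := expRxMexpNx_1 x; have p1 := expR_gt0 x.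
move: hx; rewrite ler_norml => /andP[hx1 hx2].
apply/andP; split; first lra.
set e := expR x in l1 m p1 *; set e' := expR (- x) in l2 m *.
nra.
Qed.

Lemma expR_sub_mul_ge0 (R : realType) (c x s s' : R) :
  0 <= c -> s - s' = c * x -> 0 <= x * (expR s - expR s').
Proof.
move=> c0 ss'; have [x0|x0] := lerP 0 x.
  have : s' <= s by rewrite -subr_ge0 ss' mulr_ge0.
  by rewrite -ler_expR -subr_ge0 => /(mulr_ge0 x0).
have : s <= s' by rewrite -subr_le0 ss' mulr_ge0_le0 // ltW.
by rewrite -ler_expR -subr_le0 => /(mulr_le0 (ltW x0)).
Qed.

Import measurable_realfun.

Section StiefelBounded.
Variables (R : realType) (N p : nat).
Local Notation T := (mxMeas R N p).
Local Notation S := (@stiefel R N p).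

Definition stiefel_bounded (f : T -> R) :=
  measurable_fun setT f /\ exists M : R, forall U, S U -> `|f U| <= M.

Lemma measurable_entry (i : 'I_N) (j : 'I_p) :
  measurable_fun setT (fun U : T => (U : 'M[R]_(N, p)) i j).
Proof.
move=> _ B mB; rewrite setTI.
by apply: sub_sigma_algebra; exists i, j, B.
Qed.

Lemma stiefel_entry_le1 (U : T) i j : S U -> `|(U : 'M[R]_(N, p)) i j| <= 1.
Proof.
move=> SU.
have : ((U : 'M[R]_(N, p))^T *m U) j j = 1 by rewrite SU mxE eqxx.
rewrite mxE (bigD1 i) //= !mxE => colj.
have : (U : 'M[R]_(N, p)) i j ^+ 2 <= 1.
  rewrite -colj expr2 lerDl; apply: sumr_ge0 => k _; rewrite mxE -expr2.
  exact: sqr_ge0.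
rewrite ler_norml; set x := _ i j => hx; apply/andP; split; nra.
Qed.

Lemma stiefel_bounded_entry i j :
  stiefel_bounded (fun U : T => (U : 'M[R]_(N, p)) i j).
Proof.
by split; [exact: measurable_entry | exists 1 => U; exact: stiefel_entry_le1].
Qed.

Lemma stiefel_bounded_cst c : stiefel_bounded (fun _ : T => c).
Proof. by split; [exact: measurable_cst | exists `|c|]. Qed.

Lemma stiefel_boundedD {f g} :
  stiefel_bounded f -> stiefel_bounded g -> stiefel_bounded (fun U => f U + g U).
Proof.
move=> [mf [M1 hf]] [mg [M2 hg]]; split; first exact: measurable_funD.
exists (M1 + M2) => U SU; apply: le_trans (ler_normD _ _) _.
by apply: lerD; [apply: hf | apply: hg].
Qed.

Lemma stiefel_boundedN {f} : stiefel_bounded f -> stiefel_bounded (fun U => - f U).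
Proof.
move=> [mf [M hf]]; split; first exact: measurable_funN.
by exists M => U SU; rewrite normrN; exact: hf.
Qed.

Lemma stiefel_boundedB {f g} :
  stiefel_bounded f -> stiefel_bounded g -> stiefel_bounded (fun U => f U - g U).
Proof. by move=> bf bg; apply: stiefel_boundedD => //; exact: stiefel_boundedN. Qed.

Lemma stiefel_boundedM {f g} :
  stiefel_bounded f -> stiefel_bounded g -> stiefel_bounded (fun U => f U * g U).
Proof.
move=> [mf [M1 hf]] [mg [M2 hg]]; split; first exact: measurable_funM.
exists (M1 * M2) => U SU; rewrite normrM.
by apply: ler_pM => //; [apply: hf | apply: hg].
Qed.

Lemma stiefel_bounded_sum {I : Type} (s : seq I) (F : I -> T -> R) :
  (forall i, stiefel_bounded (F i)) ->
  stiefel_bounded (fun U => \sum_(i <- s) F i U).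
Proof.
move=> bF; elim: s => [|i s IH].
  under [fun U => _]funext do rewrite big_nil; exact: stiefel_bounded_cst.
under [fun U => _]funext do rewrite big_cons; exact: stiefel_boundedD.
Qed.

Lemma stiefel_bounded_expR {f} :
  stiefel_bounded f -> stiefel_bounded (fun U => expR (f U)).
Proof.
move=> [mf [M hf]]; split; first exact: measurableT_comp mf.
exists (expR M) => U SU; rewrite ger0_norm ?expR_ge0 // ler_expR.
exact: le_trans (ler_norm _) (hf U SU).
Qed.

Lemma stiefel_bounded_eq {f g} :
  stiefel_bounded f -> f =1 g -> stiefel_bounded g.
Proof. by move=> bf /funext <-. Qed.

Definition stiefel_boundedmx {m n : nat} (F : T -> 'M[R]_(m, n)) :=
  forall i j, stiefel_bounded (fun U => F U i j).

Lemma stiefel_boundedmx_id : stiefel_boundedmx (fun U : T => (U : 'M[R]_(N, p))).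
Proof. by move=> i j; exact: stiefel_bounded_entry. Qed.

Lemma stiefel_boundedmx_cst {m n} (C : 'M[R]_(m, n)) :
  stiefel_boundedmx (fun _ => C).
Proof. by move=> i j; exact: stiefel_bounded_cst. Qed.

Lemma stiefel_boundedmx_tr {m n} {F : T -> 'M[R]_(m, n)} :
  stiefel_boundedmx F -> stiefel_boundedmx (fun U => (F U)^T).
Proof. by move=> bF i j; apply: stiefel_bounded_eq (bF j i) _ => U; rewrite mxE. Qed.

Lemma stiefel_boundedmx_mul {m n k} {F : T -> 'M[R]_(m, n)} {G : T -> 'M[R]_(n, k)} :
  stiefel_boundedmx F -> stiefel_boundedmx G ->
  stiefel_boundedmx (fun U => F U *m G U).
Proof.
move=> bF bG i j.
have := stiefel_bounded_sum (index_enum _)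
  (fun l => stiefel_boundedM (bF i l) (bG l j)).
by move/stiefel_bounded_eq; apply => U; rewrite mxE.
Qed.

Lemma stiefel_bounded_tr_conj (B : 'M[R]_N) :
  stiefel_bounded (fun U : T => \tr ((U : 'M[R]_(N, p))^T *m B *m U)).
Proof.
apply: stiefel_bounded_sum => l.
apply: stiefel_boundedmx_mul; last exact: stiefel_boundedmx_id.
apply: stiefel_boundedmx_mul; last exact: stiefel_boundedmx_cst.
exact/stiefel_boundedmx_tr/stiefel_boundedmx_id.
Qed.

Lemma stiefel_bounded_etr (B : 'M[R]_N) :
  stiefel_bounded (fun U : T => etr ((U : 'M[R]_(N, p))^T *m B *m U)).
Proof. exact/stiefel_bounded_expR/stiefel_bounded_tr_conj. Qed.

Definition stiefel_defect (U : T) : R :=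
  \sum_i \sum_j (((U : 'M[R]_(N, p))^T *m U - 1%:M) i j) ^+ 2.

Lemma stiefel_bounded_defect : stiefel_bounded stiefel_defect.
Proof.
apply: stiefel_bounded_sum => i; apply: stiefel_bounded_sum => j.
have bij : stiefel_bounded (fun U : T => ((U : 'M[R]_(N, p))^T *m U - 1%:M) i j).
  have bUU := stiefel_boundedmx_mul (stiefel_boundedmx_tr stiefel_boundedmx_id)
                                   stiefel_boundedmx_id i j.
  apply: stiefel_bounded_eq (stiefel_boundedB bUU
    (stiefel_bounded_cst ((1%:M : 'M[R]_p) i j))) _.
  by move=> U; rewrite !mxE.
by apply: stiefel_bounded_eq (stiefel_boundedM bij bij) _ => U; rewrite expr2.
Qed.

Lemma stiefel_defect_eq0 : S = stiefel_defect @^-1` [set 0].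
Proof.
apply/seteqP; split => U /=.
  move=> SU; apply: big1 => i _; apply: big1 => j _.
  by rewrite /stiefel /= in SU; rewrite SU subrr mxE expr0n.
move=> d0; apply/eqP; rewrite -subr_eq0; apply/eqP/matrixP => i j.
have sq0 (x : R) : 0 <= x ^+ 2 by exact: sqr_ge0.
have := @psumr_eq0P _ _ _ _ (fun i _ => sumr_ge0 _ (fun j _ => sq0 _)) d0 i isT.
move/(@psumr_eq0P _ _ _ _ (fun j _ => sq0 _))/(_ j isT)/eqP.
by rewrite sqrf_eq0 => /eqP ->; rewrite mxE.
Qed.

Lemma measurable_stiefel : measurable S.
Proof.
have [md _] := stiefel_bounded_defect.
rewrite stiefel_defect_eq0 -(setTI (_ @^-1` _)).
by apply: md => //; exact: measurable_set1.
Qed.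

Lemma stiefel_orth_mul (Q : 'M[R]_N) (U : T) :
  Q^T *m Q = 1%:M -> S U -> S (Q *m (U : 'M[R]_(N, p)) : T).
Proof.
rewrite /stiefel /= => hQ hU.
by rewrite trmx_mul -mulmxA (mulmxA Q^T) hQ mul1mx.
Qed.

Lemma measurable_mulmxl (Q : 'M[R]_N) :
  measurable_fun setT (fun U : T => (Q *m (U : 'M[R]_(N, p)) : T)).
Proof.
apply: (@measurability _ _ T T setT _ (@entry_sets R N p) erefl).
move=> X [B [i [j [C [mC ->]]]] <-].
have [mQU _] := stiefel_boundedmx_mul (stiefel_boundedmx_cst Q) stiefel_boundedmx_id i j.
exact: mQU.
Qed.

Lemma stiefel_bounded_comp_orth (Q : 'M[R]_N) f : Q^T *m Q = 1%:M ->
  stiefel_bounded f -> stiefel_bounded (fun U : T => f (Q *m (U : 'M[R]_(N, p)) : T)).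
Proof.
move=> hQ [mf [M hM]]; split; first exact: measurableT_comp mf (measurable_mulmxl Q).
by exists M => U SU; apply: hM; exact: stiefel_orth_mul.
Qed.

End StiefelBounded.

Section UniformStiefelIntegral.
Variables (R : realType) (N p : nat).
Local Notation T := (mxMeas R N p).
Local Notation S := (@stiefel R N p).
Local Notation measurable_S := (@measurable_stiefel R N p).
Variables (mu : probability T R) (hmu : uniform_stiefel mu).

Lemma stiefelC_null : mu (~` S) = 0%E.
Proof.
rewrite probability_setC; last exact: measurable_S.
by have [-> _] := hmu; rewrite subee.
Qed.

Lemma integrable_stiefel_bounded f :
  stiefel_bounded f -> mu.-integrable setT (EFin \o f).
Proof.
move=> [mf [M hM]]; apply/integrableP; split; first exact/measurable_EFinP.
have mabs : measurable_fun setT (fun x => `|(EFin \o f) x|%E).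
  by apply: measurableT_comp => //; exact/measurable_EFinP.
rewrite (ge0_negligible_integral (N := ~` S) _ _ mabs) //; last exact: stiefelC_null.
  2: exact: measurableC measurable_S.
rewrite setTD setCK.
apply: (@le_lt_trans _ _ (\int[mu]_(x in S) (cst `|M|%:E) x)%E).
  apply: ge0_le_integral => //.
  - exact: measurable_S.
  - exact: measurable_funS mabs.
  - by move=> U SU; rewrite /= lee_fin; apply: le_trans (hM U SU) (ler_norm _).
rewrite integral_cst; last exact: measurable_S.
rewrite [X in (_ * X)%E](_ : _ = 1%E); last exact: (proj1 hmu).
by rewrite mule1 ltry.
Qed.

Lemma Rintegral_stiefel f :
  stiefel_bounded f -> \int[mu]_x f x = \int[mu]_(x in S) f x.
Proof.
move=> bf; rewrite /Rintegral; congr fine.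
rewrite (negligible_integral (N := ~` S) _ _ (integrable_stiefel_bounded bf)) //.
- by rewrite setTD setCK.
- exact: measurableC measurable_S.
- exact: stiefelC_null.
Qed.

Lemma le_Rintegral_stiefel f g : stiefel_bounded f -> stiefel_bounded g ->
  (forall U, S U -> f U <= g U) -> \int[mu]_x f x <= \int[mu]_x g x.
Proof.
move=> bf bg fg; rewrite (Rintegral_stiefel bf) (Rintegral_stiefel bg).
apply: le_Rintegral => //; first exact: measurable_S.
- exact: integrableS measurable_S _ (integrable_stiefel_bounded bf).
- exact: integrableS measurable_S _ (integrable_stiefel_bounded bg).
Qed.

Lemma Rintegral_cst_prob c : \int[mu]_x c = c.
Proof.
rewrite Rintegral_cst // [X in fine X](_ : _ = 1%E) ?mulr1 //.
exact: probability_setT.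
Qed.

Lemma RintegralD_stiefel f g : stiefel_bounded f -> stiefel_bounded g ->
  \int[mu]_x (f x + g x) = \int[mu]_x f x + \int[mu]_x g x.
Proof. by move=> bf bg; apply: RintegralD => //; exact: integrable_stiefel_bounded. Qed.

Lemma RintegralB_stiefel f g : stiefel_bounded f -> stiefel_bounded g ->
  \int[mu]_x (f x - g x) = \int[mu]_x f x - \int[mu]_x g x.
Proof. by move=> bf bg; apply: RintegralB => //; exact: integrable_stiefel_bounded. Qed.

Lemma RintegralZl_stiefel c f : stiefel_bounded f ->
  \int[mu]_x (c * f x) = c * \int[mu]_x f x.
Proof. by move=> bf; apply: RintegralZl => //; exact: integrable_stiefel_bounded. Qed.

Lemma Rintegral_sum_stiefel {I : Type} (s : seq I) (F : I -> T -> R) :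
  (forall i, stiefel_bounded (F i)) ->
  \int[mu]_x (\sum_(i <- s) F i x) = \sum_(i <- s) \int[mu]_x F i x.
Proof.
move=> bF; elim: s => [|i s IH].
  by under eq_Rintegral do rewrite big_nil; rewrite big_nil Rintegral_cst_prob.
under eq_Rintegral do rewrite big_cons.
by rewrite big_cons RintegralD_stiefel ?IH //; exact: stiefel_bounded_sum.
Qed.

Lemma Rintegral_mulmxl_orth (Q : 'M[R]_N) f : Q^T *m Q = 1%:M ->
  stiefel_bounded f -> \int[mu]_x f (Q *m (x : 'M[R]_(N, p)) : T) = \int[mu]_x f x.
Proof.
move=> hQ bf; rewrite /Rintegral; congr fine.
have mQ := @measurable_mulmxl R N p Q.
rewrite [RHS](eq_measure_integral
  (pushforward mu (fun U : T => (Q *m (U : 'M[R]_(N, p)) : T)))).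
- rewrite (integral_pushforward mQ) //; first by apply/measurable_EFinP; case: bf.
  rewrite preimage_setT.
  exact: integrable_stiefel_bounded (stiefel_bounded_comp_orth hQ bf).
- by move=> X mX _; rewrite /pushforward; symmetry; exact: (proj2 hmu Q hQ X mX).
Qed.

Lemma Rintegral_expR_gt0 g : stiefel_bounded g -> 0 < \int[mu]_x expR (g x).
Proof.
move=> bg; have [_ [M hM]] := bg.
apply: (@lt_le_trans _ _ (expR (- M))); first exact: expR_gt0.
rewrite -{1}(Rintegral_cst_prob (expR (- M))).
apply: le_Rintegral_stiefel; [exact: stiefel_bounded_cst | exact: stiefel_bounded_expR |].
move=> U SU; rewrite ler_expR.
by have := hM U SU; rewrite ler_norml => /andP[? _]; lra.
Qed.

Lemma hyp1F1_gt0 (B : 'M[R]_N) : 0 < hyp1F1 mu B.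
Proof. exact: Rintegral_expR_gt0 (@stiefel_bounded_tr_conj R N p B). Qed.

End UniformStiefelIntegral.

Section BinghamDiagonal.
Variables (R : realType) (N p : nat).
Local Notation T := (mxMeas R N p).
Local Notation S := (@stiefel R N p).

Definition projmx (V : T) : 'M[R]_N := (V : 'M[R]_(N, p)) *m (V : 'M[R]_(N, p))^T.

Definition etr_diag (r : 'rV[R]_N) (V : T) : R :=
  etr ((V : 'M[R]_(N, p))^T *m diag_mx r *m V).

Lemma stiefel_bounded_projmx k l : stiefel_bounded (fun V => projmx V k l).
Proof.
exact: (stiefel_boundedmx_mul (@stiefel_boundedmx_id R N p)
          (stiefel_boundedmx_tr (@stiefel_boundedmx_id R N p)) k l).
Qed.

Lemma stiefel_bounded_etr_diag r : stiefel_bounded (etr_diag r).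
Proof. exact: stiefel_bounded_etr. Qed.

Lemma stiefel_bounded_projmx_etr_diag r k l :
  stiefel_bounded (fun V : T => projmx V k l * etr_diag r V).
Proof.
by apply: stiefel_boundedM;
  [exact: stiefel_bounded_projmx | exact: stiefel_bounded_etr_diag].
Qed.

Lemma projmx_mulmxl (Q : 'M[R]_N) (V : T) :
  projmx (Q *m (V : 'M[R]_(N, p)) : T) = Q *m projmx V *m Q^T.
Proof. by rewrite /projmx trmx_mul !mulmxA. Qed.

Lemma projmx_sym V k l : projmx V k l = projmx V l k.
Proof. by rewrite !mxE; apply: eq_bigr => j _; rewrite !mxE mulrC. Qed.

Lemma projmx_diag_ge0 V k : 0 <= projmx V k k.
Proof. by rewrite mxE; apply: sumr_ge0 => j _; rewrite mxE -expr2 sqr_ge0. Qed.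

(* On the Stiefel manifold [projmx V] is symmetric and idempotent, hence
   [P_kk = sum_l P_kl ^ 2 >= P_kk ^ 2]. *)
Lemma projmx_diag_le1 V k : S V -> projmx V k k <= 1.
Proof.
move=> SV.
have idem : projmx V *m projmx V = projmx V.
  rewrite /projmx mulmxA -(mulmxA _ (V : 'M[R]_(N, p))^T).
  by move: SV; rewrite /stiefel /= => ->; rewrite mulmx1.
have : projmx V k k ^+ 2 <= projmx V k k.
  have diagE : projmx V k k = \sum_l projmx V k l * projmx V l k.
    by rewrite -{1}idem mxE.
  rewrite {2}diagE (bigD1 k) //= -expr2 lerDl.
  by apply: sumr_ge0 => l _; rewrite (projmx_sym V l k) -expr2 sqr_ge0.
have := projmx_diag_ge0 V k; set x := projmx V k k => ? ?; nra.
Qed.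

Lemma etr_diagE r V : etr_diag r V = expR (\sum_k r 0 k * projmx V k k).
Proof.
rewrite /etr_diag /etr -mulmxA mxtrace_mulC -mulmxA; congr expR.
by apply: eq_bigr => k _; rewrite mul_diag_mx mxE.
Qed.

Lemma etr_diag_gt0 r V : 0 < etr_diag r V.
Proof. exact: expR_gt0. Qed.

Definition sign_flip (k : 'I_N) : 'M[R]_N := diag_mx (\row_m (if m == k then -1 else 1)).

Lemma sign_flip_orth k : (sign_flip k)^T *m sign_flip k = 1%:M.
Proof.
rewrite tr_diag_mx mulmx_diag; apply/matrixP => a b; rewrite !mxE.
by case: (a == b); [case: (a == k); rewrite /= ?mulrNN mulr1 | rewrite !mulr0n].
Qed.

Lemma projmx_sign_flip k (V : T) a b :
  projmx (sign_flip k *m (V : 'M[R]_(N, p)) : T) a b =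
  (if a == k then -1 else 1) * (if b == k then -1 else 1) * projmx V a b.
Proof.
by rewrite projmx_mulmxl tr_diag_mx mul_mx_diag mxE mul_diag_mx !mxE mulrAC.
Qed.

Lemma etr_diag_sign_flip r k (V : T) :
  etr_diag r (sign_flip k *m (V : 'M[R]_(N, p)) : T) = etr_diag r V.
Proof.
rewrite !etr_diagE; congr expR; apply: eq_bigr => m _.
by rewrite projmx_sign_flip; case: (m == k); rewrite ?mulrNN !mul1r.
Qed.

End BinghamDiagonal.

Section BinghamMoments.
Variables (R : realType) (N p : nat).
Local Notation T := (mxMeas R N p).
Local Notation S := (@stiefel R N p).
Variables (mu : probability T R) (hmu : uniform_stiefel mu).
Variables (lam : 'rV[R]_N).

Definition diag_moment (k l : 'I_N) : R := \int[mu]_V (projmx V k l * etr_diag lam V).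

Lemma diag_moment_offdiag k l : k != l -> diag_moment k l = 0.
Proof.
move=> kl.
have := Rintegral_mulmxl_orth hmu (@sign_flip_orth R N k)
  (@stiefel_bounded_projmx_etr_diag R N p lam k l).
under eq_Rintegral do
  rewrite projmx_sign_flip etr_diag_sign_flip eqxx eq_sym (negbTE kl) mulr1 -mulrA.
rewrite (RintegralZl_stiefel hmu); last exact: stiefel_bounded_projmx_etr_diag.
rewrite -/(diag_moment k l); lra.
Qed.

Lemma etr_diag_rowset k t (V : T) :
  etr_diag (rowset lam k t) V = etr_diag lam V * expR ((t - lam 0 k) * projmx V k k).
Proof.
rewrite !etr_diagE -expRD; congr expR.
rewrite (bigD1 k) //= [in RHS](bigD1 k) //= !mxE eqxx.
rewrite (eq_bigr (fun m => lam 0 m * projmx V m m)); last first.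
  by move=> m mk; rewrite !mxE (negbTE mk).
ring.
Qed.

Lemma expkappa_kE k t : expkappa_k mu lam k t =
  \int[mu]_V (etr_diag lam V * expR ((t - lam 0 k) * projmx V k k)).
Proof.
rewrite /expkappa_k /kappaB lnK; last by rewrite posrE; exact: hyp1F1_gt0.
by apply: eq_Rintegral => V _; rewrite -etr_diag_rowset.
Qed.

Lemma stiefel_bounded_tilted c k :
  stiefel_bounded (fun V : T => etr_diag lam V * expR (c * projmx V k k)).
Proof.
apply: stiefel_boundedM; first exact: stiefel_bounded_etr_diag.
by apply: stiefel_bounded_expR; apply: stiefel_boundedM;
  [exact: stiefel_bounded_cst | exact: stiefel_bounded_projmx].
Qed.

Lemma tilted_remainder_bound k h (V : T) : S V -> `|h| <= 2^-1 ->
  0 <= etr_diag lam V * (expR (h * projmx V k k) - 1 - h * projmx V k k)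
    <= 2 * h ^+ 2 * etr_diag lam V.
Proof.
move=> SV h2; have w0 := projmx_diag_ge0 V k; have w1 := projmx_diag_le1 k SV.
have E0 := etr_diag_gt0 lam V.
have hw : `|h * projmx V k k| <= 2^-1.
  by rewrite normrM (ger0_norm w0); apply: le_trans h2; rewrite ler_piMr.
have /andP[r0 r1] := expR_sub1_taylor_bound hw.
apply/andP; split; first exact: mulr_ge0 (ltW E0) r0.
rewrite mulrC ler_pM2r //; apply: le_trans r1 _.
rewrite exprMn ler_pM2l // ler_piMr ?sqr_ge0 //.
by rewrite expr_le1.
Qed.

Lemma stiefel_bounded_tilted_remainder h k : stiefel_bounded (fun V : T =>
  etr_diag lam V * (expR (h * projmx V k k) - 1 - h * projmx V k k)).
Proof.
have bhP : stiefel_bounded (fun V : T => h * projmx V k k).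
  by apply: stiefel_boundedM;
    [exact: stiefel_bounded_cst | exact: stiefel_bounded_projmx].
apply: stiefel_boundedM; first exact: stiefel_bounded_etr_diag.
apply: stiefel_boundedB; last exact: bhP.
apply: stiefel_boundedB; last exact: stiefel_bounded_cst.
exact: stiefel_bounded_expR bhP.
Qed.

Lemma Rintegral_tilted_remainder_bound k h : `|h| <= 2^-1 ->
  0 <= \int[mu]_V
         (etr_diag lam V * (expR (h * projmx V k k) - 1 - h * projmx V k k))
    <= 2 * h ^+ 2 * \int[mu]_V etr_diag lam V.
Proof.
move=> h2; have bD := stiefel_bounded_tilted_remainder h k.
have bF := @stiefel_bounded_etr_diag R N p lam.
apply/andP; split.
  rewrite -(Rintegral_cst_prob mu 0).
  apply: (le_Rintegral_stiefel hmu) => //; first exact: stiefel_bounded_cst.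
  by move=> V SV; case/andP: (tilted_remainder_bound k SV h2).
rewrite -(RintegralZl_stiefel hmu _ bF).
apply: (le_Rintegral_stiefel hmu) => //.
  by apply: stiefel_boundedM; [exact: stiefel_bounded_cst | exact: bF].
by move=> V SV; case/andP: (tilted_remainder_bound k SV h2).
Qed.

Lemma expkappa_k_quotient_bound k h : h != 0 -> `|h| <= 2^-1 ->
  `|h^-1 * (expkappa_k mu lam k (h + lam 0 k) - expkappa_k mu lam k (lam 0 k))
    - diag_moment k k| <= (2 * \int[mu]_V etr_diag lam V) * `|h|.
Proof.
move=> h0 h2; rewrite !expkappa_kE subrr addrK.
have -> : \int[mu]_V (etr_diag lam V * expR (0 * projmx V k k)) =
          \int[mu]_V etr_diag lam V.
  by apply: eq_Rintegral => V _; rewrite mul0r expR0 mulr1.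
have /andP[D0 D1] := Rintegral_tilted_remainder_bound k h2.
set F0 := \int[mu]_V etr_diag lam V in D1 *.
set D := \int[mu]_V (etr_diag lam V * _) in D0 D1.
have DE : \int[mu]_V (etr_diag lam V * expR (h * projmx V k k)) - F0
          - h * diag_moment k k = D.
  rewrite /diag_moment -(RintegralZl_stiefel hmu);
    last exact: stiefel_bounded_projmx_etr_diag.
  rewrite -!(RintegralB_stiefel hmu); first by apply: eq_Rintegral => V _; ring.
  - by apply: stiefel_boundedB;
      [exact: stiefel_bounded_tilted | exact: stiefel_bounded_etr_diag].
  - by apply: stiefel_boundedM;
      [exact: stiefel_bounded_cst | exact: stiefel_bounded_projmx_etr_diag].
  - exact: stiefel_bounded_tilted.
  - exact: stiefel_bounded_etr_diag.
have -> : h^-1 * (\int[mu]_V (etr_diag lam V * expR (h * projmx V k k)) - F0)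
          - diag_moment k k = h^-1 * D by rewrite -DE; field.
rewrite normrM normfV (ger0_norm D0) ler_pdivrMl ?normr_gt0 //.
have -> : `|h| * (2 * F0 * `|h|) = 2 * h ^+ 2 * F0.
  by rewrite -real_normK ?num_real //; ring.
exact: D1.
Qed.

Lemma derive_expkappa_k k :
  derivable (expkappa_k mu lam k) (lam 0 k) 1 /\
  derive1 (expkappa_k mu lam k) (lam 0 k) = diag_moment k k.
Proof.
apply: (@derivable_derive1_quotient_bound _ _ _ _ 2^-1 (2 * \int[mu]_V etr_diag lam V)).
- by rewrite invr_gt0.
- by rewrite mulr_ge0 // ltW // (hyp1F1_gt0 hmu (diag_mx lam)).
- exact: expkappa_k_quotient_bound.
Qed.

Section Transposition.
Variables (i j : 'I_N).
Let swap_mx : 'M[R]_N := perm_mx (tperm i j).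
Let lam_swap : 'rV[R]_N := \row_m lam 0 (tperm i j m).

Lemma swap_mx_orth : swap_mx^T *m swap_mx = 1%:M.
Proof. by rewrite tr_perm_mx -perm_mxM tpermV tperm2 perm_mx1. Qed.

Lemma projmx_swap (V : T) a b :
  projmx (swap_mx *m (V : 'M[R]_(N, p)) : T) a b = projmx V (tperm i j a) (tperm i j b).
Proof. by rewrite -row_permE !mxE; apply: eq_bigr => c _; rewrite !mxE. Qed.

Lemma etr_diag_swap (V : T) :
  etr_diag lam (swap_mx *m (V : 'M[R]_(N, p)) : T) = etr_diag lam_swap V.
Proof.
rewrite !etr_diagE; congr expR.
rewrite (reindex_inj (@perm_inj _ (tperm i j))) /=; apply: eq_bigr => m _.
by rewrite projmx_swap !tpermK !mxE.
Qed.

Lemma diag_moment_swap a : diag_moment a a =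
  \int[mu]_V (projmx V (tperm i j a) (tperm i j a) * etr_diag lam_swap V).
Proof.
rewrite /diag_moment -(Rintegral_mulmxl_orth hmu swap_mx_orth).
  by apply: eq_Rintegral => V _; rewrite projmx_swap etr_diag_swap.
exact: stiefel_bounded_projmx_etr_diag.
Qed.

Lemma etr_diag_swap_exponent (V : T) : i != j ->
  \sum_m lam 0 m * projmx V m m - \sum_m lam_swap 0 m * projmx V m m =
  (lam 0 i - lam 0 j) * (projmx V i i - projmx V j j).
Proof.
move=> ij; rewrite -sumrB (bigD1 i) //= (bigD1 j) 1?eq_sym //= big1.
  by rewrite !mxE tpermL tpermR; ring.
by move=> m /andP[mj mi]; rewrite /lam_swap mxE tpermD 1?eq_sym // subrr.
Qed.

End Transposition.

Lemma diag_moment_mono i j : lam 0 j <= lam 0 i -> diag_moment j j <= diag_moment i i.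
Proof.
move=> lij; have [->|ij] := eqVneq i j; first exact: lexx.
have := diag_moment_swap i j i; have := diag_moment_swap i j j.
rewrite tpermL tpermR.
set lam' := \row_m lam 0 (tperm i j m) => ej ei.
have bB (l : 'rV[R]_N) : stiefel_bounded (fun V : T =>
    projmx V i i * etr_diag l V - projmx V j j * etr_diag l V).
  by apply: stiefel_boundedB; exact: stiefel_bounded_projmx_etr_diag.
have : 0 <= \int[mu]_V
    ((projmx V i i * etr_diag lam V - projmx V j j * etr_diag lam V)
     - (projmx V i i * etr_diag lam' V - projmx V j j * etr_diag lam' V)).
  rewrite -(Rintegral_cst_prob mu 0).
  apply: (le_Rintegral_stiefel hmu);
    [exact: stiefel_bounded_cst | exact: stiefel_boundedB |].
  move=> V _.
  set a := projmx V i i; set b := projmx V j j.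
  set e := etr_diag lam V; set e' := etr_diag lam' V.
  have -> : a * e - b * e - (a * e' - b * e') = (a - b) * (e - e') by ring.
  rewrite /e /e' !etr_diagE.
  apply: (@expR_sub_mul_ge0 _ (lam 0 i - lam 0 j)); first by rewrite subr_ge0.
  exact: etr_diag_swap_exponent.
have bd l a := @stiefel_bounded_projmx_etr_diag R N p l a a.
rewrite (RintegralB_stiefel hmu (bB lam) (bB lam')).
rewrite !(RintegralB_stiefel hmu (bd _ i) (bd _ j)) -ei -ej.
rewrite -/(diag_moment i i) -/(diag_moment j j); lra.
Qed.

Variables (A Ua : 'M[R]_N).
Hypotheses (hUa : Ua^T *m Ua = 1%:M) (hdec : A = Ua *m diag_mx lam *m Ua^T).

Lemma etr_conj_eig (V : T) :
  etr ((Ua *m (V : 'M[R]_(N, p)))^T *m A *m (Ua *m V)) = etr_diag lam V.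
Proof.
rewrite /etr_diag hdec trmx_mul !mulmxA -(mulmxA _ Ua^T Ua) hUa mulmx1.
by rewrite -(mulmxA _ Ua^T Ua) hUa mulmx1.
Qed.

Lemma binghamSecondMomentE : binghamSecondMoment mu A =
  expR (- kappaB mu A) *: (Ua *m \matrix_(k, l) diag_moment k l *m Ua^T).
Proof.
apply/matrixP => i j; rewrite [LHS]mxE [RHS]mxE /binghamDensity.
under eq_Rintegral do rewrite mulrCA.
have bUA := stiefel_boundedM (@stiefel_bounded_projmx R N p i j)
                             (@stiefel_bounded_etr R N p A).
rewrite (RintegralZl_stiefel hmu _ bUA) -(Rintegral_mulmxl_orth hmu hUa bUA).
congr (_ * _); rewrite mulmx_conj_entry.
rewrite (@eq_Rintegral _ _ _ mu _ (fun V => \sum_l \sum_k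
    Ua i l * Ua j k * (projmx V l k * etr_diag lam V))); last first.
  move=> V _ /=; rewrite etr_conj_eig projmx_mulmxl mulmx_conj_entry big_distrl.
  by apply: eq_bigr => l _; rewrite big_distrl; apply: eq_bigr => k _; rewrite mulrA.
have bterm l k : stiefel_bounded (fun V : T =>
    Ua i l * Ua j k * (projmx V l k * etr_diag lam V)).
  by apply: stiefel_boundedM;
    [exact: stiefel_bounded_cst | exact: stiefel_bounded_projmx_etr_diag].
rewrite (Rintegral_sum_stiefel hmu); last by move=> l; exact: stiefel_bounded_sum.
apply: eq_bigr => l _; rewrite (Rintegral_sum_stiefel hmu) //.
apply: eq_bigr => k _; rewrite mxE (RintegralZl_stiefel hmu) //.
exact: stiefel_bounded_projmx_etr_diag.
Qed.

End BinghamMoments.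

Theorem proposition1 (R : realType) (N p : nat)
  (hp : (1 <= p)%N) (hNp : (p < N)%N)
  (mu : probability (mxMeas R N p) R) (hmu : uniform_stiefel mu)
  (A : 'M[R]_N) (hA : A^T = A)
  (Ua : 'M[R]_N) (hUa : Ua^T *m Ua = 1%:M)
  (lam : 'rV[R]_N)
  (hdec : A = Ua *m diag_mx lam *m Ua^T)
  (hsort : forall i j : 'I_N, (i <= j)%N -> lam 0 j <= lam 0 i) :
  (forall k : 'I_N, derivable (expkappa_k mu lam k) (lam 0 k) 1) /\
  binghamSecondMoment mu A =
    expR (- kappaB mu A) *: (Ua *m diag_mx (gammaB mu lam) *m Ua^T) /\
  (forall i j : 'I_N, (i <= j)%N -> gammaB mu lam 0 j <= gammaB mu lam 0 i).
Proof.
have gammaE k : gammaB mu lam 0 k = diag_moment mu lam k k.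
  by rewrite mxE; case: (derive_expkappa_k hmu lam k).
have momentE : \matrix_(k, l) diag_moment mu lam k l = diag_mx (gammaB mu lam).
  apply/matrixP => k l; rewrite mxE [RHS]mxE gammaE.
  have [<-|kl] := eqVneq k l; first by rewrite mulr1n.
  by rewrite (diag_moment_offdiag hmu) // mulr0n.
split; first by move=> k; case: (derive_expkappa_k hmu lam k).
split; first by rewrite (binghamSecondMomentE hmu hUa hdec) momentE.
by move=> i j ij; rewrite !gammaE; exact: (diag_moment_mono hmu) (hsort _ _ ij).
Qed.
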